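(* Let $f:[0,1]\to\mathbb{R}$ with $f(0),f(1)\in\mathbb{Z}$, let $n\in\mathbb{N}_+$, $n\ge 2$, and let $\Phi_n:[0,1]\to\mathbb{R}$ satisfy \[ \Phi_n\left(\tfrac{k+2}{n}\right)-2\Phi_n\left(\tfrac{k+1}{n}\right)+\Phi_n\left(\tfrac{k}{n}\right)\ge 2\binom{n}{k+1}^{-1},\quad k=0,\dots,n-2. \] If $f(x)+\Phi_n(x)$ is concave on $[0,1]$, then $\widetilde{B}_n(f)$ is concave on $[0,1]$.
   Context: For $n\in\mathbb{N}_+$ and $f:[0,1]\to\mathbb{R}$, $\widetilde{B}_n(f)(x):=\sum_{k=0}^n \left[f\left(\frac{k}{n}\right)\binom{n}{k}\right]x^k(1-x)^{n-k}$, where $[\alpha]$ is the largest integer $\le\alpha$. *)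

From Stdlib Require Import Reals Lra Lia.
Open Scope R_scope.

(* floor: Int_part x = up x - 1 is the largest integer <= x *)
Definition floorR (a : R) : R := IZR (Int_part a).

Definition Btilde (n : nat) (f : R -> R) (x : R) : R :=
  sum_f_R0 (fun k => floorR (f (INR k / INR n) * Binomial.C n k)
                     * x ^ k * (1 - x) ^ (n - k)) n.

Definition concave_on01 (g : R -> R) : Prop :=
  forall x y t, 0 <= x <= 1 -> 0 <= y <= 1 -> 0 <= t <= 1 ->
    t * g x + (1 - t) * g y <= g (t * x + (1 - t) * y).

From Stdlib Require Import Reals Lra Lia.
Open Scope R_scope.

(* The Bernstein polynomial with coefficients c has second derivative
   n (n - 1) times the Bernstein polynomial of degree n - 2 of the second
   differences of c, so it is concave on [0,1] as soon as c is discretely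
   concave.  Btilde_n f is the Bernstein polynomial of the coefficients
   c_k = floor(f(k/n) C(n,k)) / C(n,k), which lie within 1/C(n,k) below f(k/n).
   Rounding thus raises the second difference at k by less than 2/C(n,k+1),
   which is absorbed by the assumption on Phi together with the concavity of
   f + Phi sampled at k/n, (k+1)/n, (k+2)/n. *)

(* Pascal's recursion makes [binom n k] vanish for k > n, unlike [C n k]. *)
Fixpoint binom (n k : nat) : R :=
  match n, k with
  | O, O => 1
  | O, S _ => 0
  | S _, O => 1
  | S m, S j => binom m j + binom m (S j)
  end.

Lemma binom_gt (n k : nat) : (n < k)%nat -> binom n k = 0.
Proof.
  revert k; induction n as [|n IH]; intros k Hk; destruct k; simpl; try lia; auto.
  rewrite !IH by lia; ring.
Qed.

Lemma C_n_0 (n : nat) : C n 0 = 1.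
Proof. unfold C. rewrite Nat.sub_0_r. simpl. field. apply INR_fact_neq_0. Qed.

Lemma C_n_n (n : nat) : C n n = 1.
Proof. unfold C. rewrite Nat.sub_diag. simpl. field. apply INR_fact_neq_0. Qed.

Lemma C_pos (n k : nat) : 0 < C n k.
Proof.
  unfold C. apply Rdiv_lt_0_compat; [apply INR_fact_lt_0|].
  apply Rmult_lt_0_compat; apply INR_fact_lt_0.
Qed.

Lemma binom_C (n k : nat) : (k <= n)%nat -> binom n k = C n k.
Proof.
  revert k; induction n as [|n IH]; intros k Hk; destruct k; simpl; try lia.
  - now rewrite C_n_0.
  - now rewrite C_n_0.
  - destruct (Nat.eq_dec k n) as [->|Hkn].
    + rewrite (binom_gt n (S n)), IH, !C_n_n by lia. ring.
    + rewrite !IH by lia. apply pascal. lia.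
Qed.

Lemma binom_nonneg (n k : nat) : 0 <= binom n k.
Proof.
  destruct (Nat.le_gt_cases k n) as [Hk|Hk].
  - rewrite binom_C by exact Hk. left; apply C_pos.
  - rewrite binom_gt by exact Hk. lra.
Qed.

Definition bernstein (n : nat) (c : nat -> R) (x : R) : R :=
  sum_f_R0 (fun k => c k * binom n k * x ^ k * (1 - x) ^ (n - k)) n.

Definition shift (c : nat -> R) (k : nat) : R := c (S k).

Definition fdiff (c : nat -> R) (k : nat) : R := c (S k) - c k.

Lemma bernstein_S (n : nat) (c : nat -> R) (x : R) :
  bernstein (S n) c x = (1 - x) * bernstein n c x + x * bernstein n (shift c) x.
Proof.
  unfold bernstein. rewrite decomp_sum by lia. simpl Nat.pred.
  rewrite (sum_eq _ (fun j => c (S j) * binom n j * x ^ S j * (1 - x) ^ (n - j)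
                             + c (S j) * binom n (S j) * x ^ S j * (1 - x) ^ (n - j))).
  2:{ intros i Hi. simpl binom. replace (S n - S i)%nat with (n - i)%nat by lia. ring. }
  rewrite plus_sum.
  assert (Hright : sum_f_R0 (fun j => c (S j) * binom n j * x ^ S j * (1 - x) ^ (n - j)) n
             = x * sum_f_R0 (fun k => shift c k * binom n k * x ^ k * (1 - x) ^ (n - k)) n).
  { rewrite scal_sum. apply sum_eq. intros i Hi. unfold shift. simpl. ring. }
  assert (Hleft : c 0%nat * binom (S n) 0 * x ^ 0 * (1 - x) ^ (S n - 0)
        + sum_f_R0 (fun j => c (S j) * binom n (S j) * x ^ S j * (1 - x) ^ (n - j)) n
        = (1 - x) * sum_f_R0 (fun k => c k * binom n k * x ^ k * (1 - x) ^ (n - k)) n).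
  { transitivity (sum_f_R0 (fun k => c k * binom n k * x ^ k * (1 - x) ^ (S n - k)) (S n)).
    - rewrite (decomp_sum _ (S n)) by lia. simpl Nat.pred. simpl binom.
      destruct n; reflexivity.
    - rewrite tech5, (binom_gt n (S n)), scal_sum by lia.
      rewrite Rmult_0_r, !Rmult_0_l, Rplus_0_r. apply sum_eq. intros i Hi.
      replace (S n - i)%nat with (S (n - i)) by lia. simpl. ring. }
  lra.
Qed.

Lemma bernstein_minus (n : nat) (a b : nat -> R) (x : R) :
  bernstein n (fun k => a k - b k) x = bernstein n a x - bernstein n b x.
Proof. unfold bernstein. rewrite <- minus_sum. apply sum_eq. intros; ring. Qed.

Lemma INR_mult_bernstein_pred (n : nat) (c : nat -> R) (x : R) :
  INR n * bernstein n c x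
  = INR n * ((1 - x) * bernstein (pred n) c x + x * bernstein (pred n) (shift c) x).
Proof. destruct n as [|m]; [simpl; ring|]. now rewrite bernstein_S. Qed.

Lemma derivable_pt_lim_bernstein (n : nat) (c : nat -> R) (x : R) :
  derivable_pt_lim (bernstein n c) x (INR n * bernstein (pred n) (fdiff c) x).
Proof.
  revert c x; induction n as [|n IH]; intros c x.
  - apply (derivable_pt_lim_ext (fct_cte (c 0%nat))).
    { intro y. unfold bernstein, fct_cte. simpl. ring. }
    simpl INR. rewrite Rmult_0_l.
    apply derivable_pt_lim_const.
  - apply (derivable_pt_lim_ext
             (fun y => (1 - y) * bernstein n c y + y * bernstein n (shift c) y)).
    { intro y. symmetry. apply bernstein_S. }
    replace (INR (S n) * bernstein (pred (S n)) (fdiff c) x)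
      with ((-1 * bernstein n c x + (1 - x) * (INR n * bernstein (pred n) (fdiff c) x))
            + (1 * bernstein n (shift c) x
               + x * (INR n * bernstein (pred n) (fdiff (shift c)) x))).
    + apply (derivable_pt_lim_plus (fun y => (1 - y) * bernstein n c y)
                                   (fun y => y * bernstein n (shift c) y)).
      * apply (derivable_pt_lim_mult (fun y => 1 - y)); [|apply IH].
        apply (derivable_pt_lim_ext (fct_cte 1 - id)%F); [reflexivity|].
        replace (-1) with (0 - 1) by ring.
        apply derivable_pt_lim_minus;
          [apply derivable_pt_lim_const | apply derivable_pt_lim_id].
      * apply (derivable_pt_lim_mult id); [apply derivable_pt_lim_id | apply IH].
    + change (fdiff (shift c)) with (shift (fdiff c)).
      pose proof (INR_mult_bernstein_pred n (fdiff c) x) as Hpred.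
      pose proof (bernstein_minus n (shift c) c x) as Hdiff.
      change (fun k => shift c k - c k) with (fdiff c) in Hdiff.
      simpl pred. rewrite S_INR. nra.
Qed.

Lemma bernstein_nonpos (n : nat) (c : nat -> R) (x : R) :
  0 <= x <= 1 -> (forall k, (k <= n)%nat -> c k <= 0) -> bernstein n c x <= 0.
Proof.
  intros Hx Hc. unfold bernstein.
  apply Rle_trans with (sum_f_R0 (fun _ => 0) n); [|rewrite sum_cte; lra].
  apply sum_Rle. intros k Hk.
  assert (0 <= binom n k * x ^ k * (1 - x) ^ (n - k)).
  { pose proof (binom_nonneg n k).
    apply Rmult_le_pos; [apply Rmult_le_pos|]; try apply pow_le; lra. }
  specialize (Hc k Hk). nra.
Qed.

Lemma MVT_le (g g' : R -> R) (a b : R) :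
  a <= b -> (forall x, derivable_pt_lim g x (g' x)) ->
  exists c, a <= c <= b /\ g b - g a = g' c * (b - a).
Proof.
  intros Hab Hd. destruct (Rle_lt_or_eq_dec a b Hab) as [Hlt|<-].
  - destruct (MVT_cor2 g g' a b Hlt (fun c _ => Hd c)) as [c [E Hc]].
    exists c; split; [lra|exact E].
  - exists a; split; [lra|ring].
Qed.

Lemma antitone_of_derivative_nonpos (g g' : R -> R) :
  (forall x, derivable_pt_lim g x (g' x)) ->
  (forall x, 0 <= x <= 1 -> g' x <= 0) ->
  forall u v, 0 <= u -> u <= v -> v <= 1 -> g v <= g u.
Proof.
  intros Hd Hneg u v Hu Huv Hv.
  destruct (MVT_le g g' u v Huv Hd) as [c [Hc E]].
  specialize (Hneg c ltac:(lra)). nra.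
Qed.

Lemma concave_on01_of_antitone_derivative (g g' : R -> R) :
  (forall x, derivable_pt_lim g x (g' x)) ->
  (forall u v, 0 <= u -> u <= v -> v <= 1 -> g' v <= g' u) ->
  concave_on01 g.
Proof.
  intros Hd Hanti.
  assert (Hchord : forall x y t, 0 <= x -> x <= y -> y <= 1 -> 0 <= t <= 1 ->
             t * g x + (1 - t) * g y <= g (t * x + (1 - t) * y)).
  { intros x y t Hx Hxy Hy Ht. set (z := t * x + (1 - t) * y).
    assert (Hzx : z - x = (1 - t) * (y - x)) by (unfold z; ring).
    assert (Hyz : y - z = t * (y - x)) by (unfold z; ring).
    assert (0 <= (1 - t) * (y - x)) by (apply Rmult_le_pos; lra).
    assert (0 <= t * (y - x)) by (apply Rmult_le_pos; lra).
    destruct (MVT_le g g' x z ltac:(lra) Hd) as [c1 [Hc1 E1]].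
    destruct (MVT_le g g' z y ltac:(lra) Hd) as [c2 [Hc2 E2]].
    pose proof (Hanti c1 c2 ltac:(lra) ltac:(lra) ltac:(lra)) as Hc12.
    rewrite Hzx in E1. rewrite Hyz in E2.
    assert (0 <= t * (1 - t) * (y - x)) by (apply Rmult_le_pos; [nra|lra]).
    nra. }
  intros x y t Hx Hy Ht.
  destruct (Rle_or_lt x y) as [Hxy|Hyx]; [now apply Hchord|].
  replace (t * x + (1 - t) * y) with ((1 - t) * y + (1 - (1 - t)) * x) by ring.
  pose proof (Hchord y x (1 - t) ltac:(lra) ltac:(lra) ltac:(lra) ltac:(lra)).
  lra.
Qed.

Lemma bernstein_concave (n : nat) (c : nat -> R) :
  (forall k, (k <= n - 2)%nat -> fdiff (fdiff c) k <= 0) ->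
  concave_on01 (bernstein n c).
Proof.
  intros Hc.
  apply (concave_on01_of_antitone_derivative _ _ (derivable_pt_lim_bernstein n c)).
  apply (antitone_of_derivative_nonpos _
           (fun x => INR n * (INR (pred n) * bernstein (pred (pred n)) (fdiff (fdiff c)) x))).
  - intro x. apply (derivable_pt_lim_scal (bernstein (pred n) (fdiff c))).
    apply derivable_pt_lim_bernstein.
  - intros x Hx.
    assert (bernstein (pred (pred n)) (fdiff (fdiff c)) x <= 0).
    { apply bernstein_nonpos; [exact Hx|]. intros k Hk. apply Hc. lia. }
    pose proof (pos_INR n). pose proof (pos_INR (pred n)).
    assert (0 <= INR n * INR (pred n)) by (apply Rmult_le_pos; lra).
    nra.
Qed.

Lemma floorR_div_bounds (y b : R) :
  0 < b -> floorR (y * b) / b <= y /\ y - / b < floorR (y * b) / b.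
Proof.
  intros Hb. unfold floorR.
  destruct (base_Int_part (y * b)) as [Hle Hgt].
  set (m := IZR (Int_part (y * b))) in *.
  split.
  - apply (Rmult_le_reg_r b); [exact Hb|]. unfold Rdiv.
    rewrite Rmult_assoc, Rinv_l by lra. lra.
  - apply (Rmult_lt_reg_r b); [exact Hb|]. unfold Rdiv.
    rewrite Rmult_assoc, Rinv_l, Rmult_minus_distr_r, Rinv_l by lra. lra.
Qed.

Lemma Btilde_bernstein (n : nat) (f : R -> R) (x : R) :
  Btilde n f x
  = bernstein n (fun k => floorR (f (INR k / INR n) * C n k) / C n k) x.
Proof.
  unfold Btilde, bernstein. apply sum_eq. intros k Hk.
  rewrite binom_C by exact Hk. pose proof (C_pos n k). field. lra.
Qed.

Lemma concave_on01_grid_second_diff (g : R -> R) (n k : nat) :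
  concave_on01 g -> (k + 2 <= n)%nat ->
  g (INR (k + 2) / INR n) - 2 * g (INR (k + 1) / INR n) + g (INR k / INR n) <= 0.
Proof.
  intros Hg Hk.
  assert (Hn : 0 < INR n) by (apply lt_0_INR; lia).
  assert (Hgrid : forall j, (j <= n)%nat -> 0 <= INR j / INR n <= 1).
  { intros j Hj. pose proof (pos_INR j). apply le_INR in Hj.
    split; [unfold Rdiv; pose proof (Rinv_0_lt_compat _ Hn); nra|].
    apply (Rmult_le_reg_r (INR n)); [exact Hn|]. unfold Rdiv.
    rewrite Rmult_assoc, Rinv_l by lra. lra. }
  pose proof (Hg _ _ (/ 2) (Hgrid k ltac:(lia)) (Hgrid (k + 2)%nat Hk) ltac:(lra)) as Hmid.
  replace (/ 2 * (INR k / INR n) + (1 - / 2) * (INR (k + 2) / INR n))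
    with (INR (k + 1) / INR n) in Hmid by (rewrite !plus_INR; simpl; field; lra).
  lra.
Qed.

Theorem proposition3p2 (f Phi : R -> R) (n : nat) :
  (exists z : Z, f 0 = IZR z) ->
  (exists z : Z, f 1 = IZR z) ->
  (2 <= n)%nat ->
  (forall k : nat, (k <= n - 2)%nat ->
     Phi (INR (k + 2) / INR n) - 2 * Phi (INR (k + 1) / INR n) + Phi (INR k / INR n)
       >= 2 / Binomial.C n (k + 1)) ->
  concave_on01 (fun x => f x + Phi x) ->
  concave_on01 (Btilde n f).
Proof.
  intros _ _ Hn HPhi Hconc.
  set (c := fun k => floorR (f (INR k / INR n) * C n k) / C n k).
  assert (Hc : forall k, (k <= n - 2)%nat -> fdiff (fdiff c) k <= 0).
  { intros k Hk. unfold fdiff, c.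
    pose proof (HPhi k Hk) as HP.
    pose proof (concave_on01_grid_second_diff _ n k Hconc ltac:(lia)) as Hf.
    replace (k + 2)%nat with (S (S k)) in HP, Hf by lia.
    replace (k + 1)%nat with (S k) in HP, Hf by lia.
    cbv beta in Hf.
    pose proof (floorR_div_bounds (f (INR k / INR n)) _ (C_pos n k)).
    pose proof (floorR_div_bounds (f (INR (S k) / INR n)) _ (C_pos n (S k))).
    pose proof (floorR_div_bounds (f (INR (S (S k)) / INR n)) _ (C_pos n (S (S k)))).
    lra. }
  intros x y t Hx Hy Ht.
  rewrite !Btilde_bernstein.
  exact (bernstein_concave n c Hc x y t Hx Hy Ht).
Qed.
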